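(* Let $T>0$, $I=[0,T]$, $\nu_1,\nu_2\in\mathbb{R}$, $p>1$. Let $\Phi:\mathbb{R}\to\mathbb{R}$ be a strictly increasing homeomorphism; let $A:W^{1,p}(I)\to C(I,\mathbb{R})$, $x\mapsto A_x$, be continuous w.r.t. the uniform topology, with $h_1,h_2\in C(I,\mathbb{R})$, $h_1,h_2\ge0$, $1/h_1,1/h_2\in L^p(I)$ and $h_1(t)\le A_x(t)\le h_2(t)$ for all $x\in W^{1,p}(I)$, $t\in I$; let $F:W^{1,p}(I)\to L^1(I)$, $x\mapsto F_x$, be continuous with $|F_x(t)|\le\psi(t)$ for all $x$ and a.e. $t$, for some non-negative $\psi\in L^1(I)$. Set $\mathcal{F}_x(t):=\int_0^tF_x(s)\,ds$. Then for every $x\in W^{1,p}(I)$ there exists a unique $\xi_x\in\mathbb{R}$ such that $\int_0^T\frac{1}{A_x(t)}\Phi^{-1}(\xi_x+\mathcal{F}_x(t))\,dt=\nu_2-\nu_1$, and there exists a constant $\mathbf{c}_0>0$ such that $|\xi_x|\le\mathbf{c}_0$ for every $x\in W^{1,p}(I)$.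
   Context: $W^{1,p}(I)$ is regarded as a subspace of $C(I,\mathbb{R})$; continuity of $A$ refers to the sup norm on both sides. *)

From HB Require Import structures.
From mathcomp Require Import all_boot all_order all_algebra.
From mathcomp Require Import all_classical all_reals all_analysis.
Set Implicit Arguments. Unset Strict Implicit. Unset Printing Implicit Defensive.
Import Order.TTheory GRing.Theory Num.Theory.
Import numFieldNormedType.Exports.
Local Open Scope classical_set_scope.
Local Open Scope ring_scope.

Notation leb R := (@lebesgue_measure R).

Definition Icc {R : realType} (T : R) : set R := `[0, T]%classic.

Definition in_Lp {R : realType} (T p : R) (g : R -> R) : Prop :=
  measurable_fun (Icc T) g /\
  (\int[leb R]_(t in (Icc T)) ((`|g t| `^ p)%R%:E) < +oo)%E.

Definition in_L1 {R : realType} (T : R) (g : R -> R) : Prop :=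
  (leb R).-integrable (Icc T) (fun t => (g t)%:E).

(* x ∈ W^{1,p}(I), seen as a continuous function on I: x is the primitive
   of some L^p function g, i.e. x t = x 0 + \int_0^t g for t in I. *)
Definition W1p {R : realType} (T p : R) (x : R -> R) : Prop :=
  exists g : R -> R, in_Lp T p g /\
    forall t, 0 <= t <= T -> x t = x 0 + Rintegral (leb R) (Icc t) g.

Definition sup_close {R : realType} (T : R) (f g : R -> R) (d : R) : Prop :=
  forall t, 0 <= t <= T -> `|f t - g t| <= d.

Definition primF {R : realType} (Fx : R -> R) (t : R) : R :=
  Rintegral (leb R) (Icc t) Fx.

From HB Require Import structures.
From mathcomp Require Import all_boot all_order all_algebra.
From mathcomp Require Import all_classical all_reals all_analysis.
From mathcomp Require Import measurable_realfun lebesgue_integral_under ftc ring lra.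
Import Order.TTheory GRing.Theory Num.Theory.
Import numFieldNormedType.Exports.
Set Implicit Arguments. Unset Strict Implicit. Unset Printing Implicit Defensive.
Local Open Scope classical_set_scope.
Local Open Scope ring_scope.

(* Fix x and put a := 1/A_x, P := primF (F x).  Off the null set where h1 vanishes,
   1/h2 <= a <= 1/h1, so a is integrable (1/h1 is in L^p, hence in L^1, on the
   bounded interval I) and a >= c := 1/(max h2 + 1) a.e.; moreover
   |P| <= M := \int_I psi.  The map
     G xi := \int_I a(t) Phi^-1(xi + P(t)) dt
   is therefore continuous (dominated convergence) and strictly increasing, with
   G xi >= c T Phi^-1(xi - M) when Phi^-1(xi - M) >= 0, and symmetrically.  For
   L > 0 with |nu2 - nu1| < c T L, the equation G xi = nu2 - nu1 thus has exactly
   one solution, and it lies in [-M + Phi(-L), M + Phi(L)]; as c, M and L do not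
   depend on x, this gives the uniform bound. *)

Section ae_integral.
Context d (T : measurableType d) (R : realType) (mu : {measure set T -> \bar R}).

Lemma ae_impl (P Q : T -> Prop) : (forall x, P x -> Q x) ->
  {ae mu, forall x, P x} -> {ae mu, forall x, Q x}.
Proof. by move=> PQ; apply: filterS. Qed.

Lemma ae_le_Rintegral (D : set T) (f g : T -> R) : measurable D ->
  mu.-integrable D (EFin \o f) -> mu.-integrable D (EFin \o g) ->
  {ae mu, forall x, D x -> f x <= g x} ->
  Rintegral mu D f <= Rintegral mu D g.
Proof.
move=> mD fi gi [N [mN N0 fgN]].
rewrite /Rintegral (negligible_integral mN mD fi N0) (negligible_integral mN mD gi N0).
have mDN : measurable (D `\` N) by exact: measurableD.
apply: le_Rintegral => //; [exact: integrableS fi|exact: integrableS gi|].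
by move=> x [Dx Nx]; apply: contra_notP Nx => fgx; apply: fgN => /(_ Dx).
Qed.

Lemma ae_le_integrable (D : set T) (f g : T -> R) : measurable D ->
  measurable_fun D f -> mu.-integrable D (EFin \o g) ->
  {ae mu, forall x, D x -> `|f x| <= `|g x|} -> mu.-integrable D (EFin \o f).
Proof.
move=> mD mf /integrableP[mg g_fin] fg; apply/integrableP; split.
  exact/measurable_EFinP.
(* [//] discharges the domination goal with [fg]: [`|r%:E| <= `|s%:E|] computes to [`|r| <= `|s|]. *)
apply: le_lt_trans g_fin; apply: ae_ge0_le_integral => //.
- by apply/measurable_EFinP; exact: measurableT_comp mf.
- by apply/measurable_EFinP; apply: measurableT_comp => //; exact/measurable_EFinP.
Qed.

Lemma ae_gt0_of_ge0 (D : set T) (h : T -> R) : measurable D ->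
  measurable_fun D h -> (forall x, D x -> 0 <= h x) ->
  mu (D `&` [set x | h x = 0]) = 0%E -> {ae mu, forall x, D x -> 0 < h x}.
Proof.
move=> mD mh h_ge0 h0_null; exists (D `&` [set x | h x = 0]); split => //.
  exact: mh mD [set 0] (measurable_set1 0).
move=> x /= /not_implyP[Dx /negP]; rewrite lt_def h_ge0 // andbT negbK => /eqP.
by split.
Qed.

End ae_integral.

Section interval.
Context {R : realType}.
Implicit Types (T k p : R) (g : R -> R).

Lemma measurable_fun_inv : measurable_fun setT (@GRing.inv R).
Proof.
have -> : [set: R] = [set x : R | x != 0] `|` [set 0].
  by apply/seteqP; split => x //= _; have [->|] := eqVneq x 0; [right|left].
apply/measurable_funU; [apply: open_measurable; exact: open_neq|by []|].
split; last exact: measurable_fun_set1.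
apply: open_continuous_measurable_fun; first exact: open_neq.
by move=> x /set_mem /= x0; exact: inv_continuous.
Qed.

Lemma measurable_Icc T : measurable (Icc T : set (measurableTypeR R)).
Proof. exact: measurable_itv. Qed.

Lemma lebesgue_measure_Icc T : 0 <= T ->
  (leb R : {measure set (measurableTypeR R) -> \bar R}) (Icc T) = T%:E.
Proof.
move=> T0; rewrite /Icc /= lebesgue_measure_itv /= lte_fin.
by case: ltgtP T0 => // [_ _|<- _]; rewrite ?sube0 ?subee.
Qed.

Lemma integrable_cst_Icc T k : 0 <= T ->
  (leb R).-integrable (Icc T) (fun _ => k%:E).
Proof.
move=> T0; apply/integrableP; split; first exact: measurable_cst.
rewrite integral_cst; last exact: measurable_Icc.
by rewrite lebesgue_measure_Icc // -EFinM ltry.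
Qed.

Lemma Rintegral_cst_Icc T k : 0 <= T -> Rintegral (leb R) (Icc T) (fun _ => k) = k * T.
Proof.
by move=> T0; rewrite Rintegral_cst ?lebesgue_measure_Icc //; exact: measurable_Icc.
Qed.

Lemma in_Lp_integrable T p g : 0 <= T -> 1 <= p -> in_Lp T p g ->
  (leb R).-integrable (Icc T) (EFin \o g).
Proof.
move=> T0 p1 [mg g_fin].
have mgp : measurable_fun (Icc T) (fun t => `|g t| `^ p).
  exact/(measurableT_comp (measurable_powR _))/measurableT_comp.
have gp_int : (leb R).-integrable (Icc T) (EFin \o (fun t => `|g t| `^ p)).
  apply/integrableP; split; first exact/measurable_EFinP.
  by under eq_integral do rewrite /= ger0_norm ?powR_ge0//.
have := integrableD (measurable_Icc T) (integrable_cst_Icc 1 T0) gp_int.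
apply: le_integrable; [exact: measurable_Icc|exact/measurable_EFinP|].
move=> t _; rewrite /= lee_fin [leRHS]ger0_norm ?addr_ge0 ?powR_ge0//.
have [g_le1|g_gt1] := leP `|g t| 1; first by rewrite ler_wpDr ?powR_ge0.
by rewrite ler_wpDl // -[leLHS]powRr1 // ler_powR // ltW.
Qed.

Lemma primF_le_Rintegral T F psi : in_L1 T F -> in_L1 T psi ->
  {ae leb R, forall t, Icc T t -> `|F t| <= psi t} ->
  (forall t, Icc T t -> 0 <= psi t) ->
  forall t, Icc T t -> `|primF F t| <= Rintegral (leb R) (Icc T) psi.
Proof.
move=> F_int psi_int F_psi psi_ge0 t It.
have tT : t <= T by move: It; rewrite /Icc /= in_itv => /andP[].
have sub : Icc t `<=` Icc T.
  by move=> s; rewrite /Icc /= !in_itv => /andP[-> /le_trans]; apply.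
have mIt := measurable_Icc t; have mI := measurable_Icc T.
have psi_int_t := integrableS mI mIt sub psi_int.
apply: le_trans (le_normr_Rintegral mIt (integrableS mI mIt sub F_int)) _.
apply: (@le_trans _ _ (Rintegral (leb R) (Icc t) psi)).
  apply: ae_le_Rintegral => //; first exact/integrable_norm/(integrableS mI mIt sub).
  by apply: ae_impl F_psi => s F_psi_s /sub; exact: F_psi_s.
apply: fine_le; [exact: integrable_fin_num|exact: integrable_fin_num|].
by apply: ge0_subset_integral => //; case/integrableP: psi_int.
Qed.

End interval.

Definition shift_integral {R : realType} (T : R) (a f P : R -> R) (xi : R) : R :=
  Rintegral (leb R) (Icc T) (fun t => a t * f (xi + P t)).

Section shift_integral.
Context {R : realType}.
Variables (T c M : R) (a P Phi Phiinv : R -> R).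
Hypotheses (T_gt0 : 0 < T) (c_gt0 : 0 < c).
Hypotheses (a_int : (leb R).-integrable (Icc T) (EFin \o a))
  (a_ge0 : forall t, Icc T t -> 0 <= a t)
  (a_ge : {ae leb R, forall t, Icc T t -> c <= a t}).
Hypotheses (mP : measurable_fun (Icc T) P) (P_le : forall t, Icc T t -> `|P t| <= M).
Hypotheses (Phiinv_cont : continuous Phiinv) (Phiinv_lt : {homo Phiinv : u v / u < v})
  (PhiK : cancel Phi Phiinv).

Local Notation I := (Icc T).
Local Notation G := (shift_integral T a Phiinv P).

Let mI := measurable_Icc T.
Let Phiinv_le : {homo Phiinv : u v / u <= v} := ltW_homo Phiinv_lt.

Let P_itv t : I t -> - M <= P t <= M.
Proof. by move=> /P_le; rewrite ler_norml. Qed.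

Let M_ge0 : 0 <= M.
Proof.
have /P_itv : I 0 by rewrite /Icc /= in_itv /= lexx ltW.
by case/andP=> ? ?; lra.
Qed.

Let cst_int k : (leb R).-integrable I (EFin \o (fun _ => k)).
Proof. exact: integrable_cst_Icc (ltW T_gt0). Qed.

Let Phiinv_shift_le u v xi t : u <= xi <= v -> I t ->
  `|Phiinv (xi + P t)| <= `|Phiinv (u - M)| + `|Phiinv (v + M)|.
Proof.
move=> /andP[uxi xiv] /P_itv /andP[PM1 PM2].
have lo : Phiinv (u - M) <= Phiinv (xi + P t) by apply: Phiinv_le; lra.
have hi : Phiinv (xi + P t) <= Phiinv (v + M) by apply: Phiinv_le; lra.
have := ler_norm (Phiinv (v + M)); have := ler_norm (- Phiinv (u - M)).
have := normr_ge0 (Phiinv (v + M)); have := normr_ge0 (Phiinv (u - M)).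
rewrite normrN ler_norml; lra.
Qed.

Let shift_integrand_le u v xi t : u <= xi <= v -> I t ->
  `|a t * Phiinv (xi + P t)| <= (`|Phiinv (u - M)| + `|Phiinv (v + M)|) * a t.
Proof.
move=> uxv It; rewrite normrM (ger0_norm (a_ge0 It)) mulrC.
by rewrite ler_wpM2r ?a_ge0 ?Phiinv_shift_le.
Qed.

Let shift_integrand_int xi : (leb R).-integrable I (EFin \o (fun t => a t * Phiinv (xi + P t))).
Proof.
have uxv : xi <= xi <= xi by rewrite lexx.
have /integrableP[ma _] := a_int; move/measurable_EFinP in ma.
apply: le_integrable (integrableZl mI (`|Phiinv (xi - M)| + `|Phiinv (xi + M)|) a_int) => //.
- apply/measurable_EFinP; apply: measurable_funM => //; apply: measurableT_comp.
    exact: continuous_measurable_fun.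
  by apply: measurable_funD => //; exact: measurable_cst.
- move=> t It /=; rewrite lee_fin [leRHS]ger0_norm ?mulr_ge0 ?addr_ge0 ?a_ge0 //.
  exact: shift_integrand_le.
Qed.

Lemma shift_integral_ge xi : 0 <= Phiinv (xi - M) -> c * Phiinv (xi - M) * T <= G xi.
Proof.
move=> Phiinv_ge0; rewrite -(Rintegral_cst_Icc _ (ltW T_gt0)).
apply: ae_le_Rintegral; [exact: mI|exact: cst_int|exact: shift_integrand_int|].
apply: ae_impl a_ge => t a_ge_t It; have /andP[MP _] := P_itv It.
have : Phiinv (xi - M) <= Phiinv (xi + P t) by apply: Phiinv_le; lra.
move=> Phiinv_le_t; apply: le_trans (ler_wpM2r Phiinv_ge0 (a_ge_t It)) _.
by rewrite ler_wpM2l ?a_ge0.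
Qed.

Lemma shift_integral_le xi : Phiinv (xi + M) <= 0 -> G xi <= c * Phiinv (xi + M) * T.
Proof.
move=> Phiinv_le0; rewrite -(Rintegral_cst_Icc _ (ltW T_gt0)).
apply: ae_le_Rintegral; [exact: mI|exact: shift_integrand_int|exact: cst_int|].
apply: ae_impl a_ge => t a_ge_t It; have /andP[_ PM] := P_itv It.
have : Phiinv (xi + P t) <= Phiinv (xi + M) by apply: Phiinv_le; lra.
move=> Phiinv_le_t; apply: le_trans (ler_wpM2l (a_ge0 It) Phiinv_le_t) _.
by apply: ler_wnM2r => //; exact: a_ge_t.
Qed.

Lemma shift_integral_lt : {homo G : xi xi' / xi < xi'}.
Proof.
move=> xi xi' lt_xi.
have MM : - M <= M by have := M_ge0; lra.
pose gap u := Phiinv (xi' + u) - Phiinv (xi + u).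
have gap_cont : {within `[- M, M], continuous gap}.
  apply: continuous_subspaceT => u; apply: continuousB; apply: continuous_comp;
    by [apply: cvgD; [exact: cvg_cst|exact: cvg_id]|exact: Phiinv_cont].
have [u _ gap_min] := EVT_min MM gap_cont.
have gap_gt0 : 0 < gap u by rewrite subr_gt0 Phiinv_lt // ltrD2r.
suff : G xi + c * gap u * T <= G xi' by have := mulr_gt0 (mulr_gt0 c_gt0 gap_gt0) T_gt0; lra.
rewrite -(Rintegral_cst_Icc _ (ltW T_gt0)) -RintegralD; [|exact: mI|exact: shift_integrand_int|exact: cst_int].
apply: ae_le_Rintegral; [exact: mI| |exact: shift_integrand_int|].
  by apply: eq_integrable (integrableD mI (shift_integrand_int xi) (cst_int (c * gap u))).
apply: ae_impl a_ge => t a_ge_t It.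
have gap_le : gap u <= gap (P t) by apply: gap_min; rewrite in_itv /= P_itv.
have := ler_wpM2l (a_ge0 It) gap_le; have := ler_wpM2r (ltW gap_gt0) (a_ge_t It).
rewrite /gap; lra.
Qed.

Lemma continuous_shift_integral : continuous G.
Proof.
move=> xi0; pose K := `|Phiinv (xi0 - 1 - M)| + `|Phiinv (xi0 + 1 + M)|.
have Ka_int : (leb R).-integrable I (EFin \o (fun t => K * a t)).
  by apply: eq_integrable (integrableZl mI K a_int) => // t _ /=; rewrite EFinM.
apply: (continuity_under_integral mI (u := xi0 - 1) (v := xi0 + 1)
  (fun xi _ => shift_integrand_int xi) _ Ka_int).
- apply: aeW => t _ xi _; apply: continuousM; first exact: cvg_cst.
  apply: continuous_comp; last exact: Phiinv_cont.
  by apply: cvgD; [exact: cvg_id|exact: cvg_cst].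
- move=> xi; rewrite /= in_itv /= => /andP[lo hi]; apply: aeW => t It.
  by apply: shift_integrand_le => //; rewrite !ltW.
- by rewrite inE /= in_itv /=; apply/andP; split; lra.
Qed.

Lemma shift_integral_eq_bounds nu L xi : 0 < L -> `|nu| < c * T * L -> G xi = nu ->
  - M + Phi (- L) <= xi <= M + Phi L.
Proof.
move=> L_gt0 nuL Gxi; have := ler_norm nu; have := ler_norm (- nu); rewrite normrN.
move=> nu_le nu_ge; apply/andP; split; rewrite leNgt; apply/negP => xi_out.
- have lt_L : Phiinv (xi + M) < - L by rewrite -[ltRHS]PhiK Phiinv_lt //; lra.
  have := shift_integral_le (ltW (lt_trans lt_L _)); rewrite oppr_lt0 Gxi => /(_ L_gt0).
  have : c * Phiinv (xi + M) * T < c * (- L) * T by rewrite ltr_pM2r // ltr_pM2l.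
  lra.
- have lt_L : L < Phiinv (xi - M) by rewrite -[ltLHS]PhiK Phiinv_lt //; lra.
  have := shift_integral_ge (ltW (lt_trans L_gt0 lt_L)); rewrite Gxi.
  have : c * L * T < c * Phiinv (xi - M) * T by rewrite ltr_pM2r // ltr_pM2l.
  lra.
Qed.

Lemma exists_shift_integral_eq nu L : 0 < L -> `|nu| < c * T * L -> exists xi, G xi = nu.
Proof.
move=> L_gt0 nuL; have := ler_norm nu; have := ler_norm (- nu); rewrite normrN.
move=> nu_le nu_ge.
have ge_L : c * L * T <= G (M + Phi L).
  have Phi_L : Phiinv (M + Phi L - M) = L by rewrite addrC addKr PhiK.
  by rewrite -[X in c * X * T]Phi_L shift_integral_ge // Phi_L ltW.
have le_L : G (- M + Phi (- L)) <= c * (- L) * T.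
  have Phi_L : Phiinv (- M + Phi (- L) + M) = - L by rewrite addrAC addNr add0r PhiK.
  by rewrite -[X in c * X * T]Phi_L shift_integral_le // Phi_L oppr_le0 ltW.
have Phi_le : Phi (- L) <= Phi L by rewrite leNgt; apply/negP => /Phiinv_lt; rewrite !PhiK; lra.
have M_le : - M + Phi (- L) <= M + Phi L by have := M_ge0; lra.
have nu_between : Num.min (G (- M + Phi (- L))) (G (M + Phi L)) <= nu <=
    Num.max (G (- M + Phi (- L))) (G (M + Phi L)).
  by rewrite ge_min le_max; apply/andP; split; apply/orP; [left|right]; lra.
have G_cont : {within `[- M + Phi (- L), M + Phi L], continuous G}.
  exact/continuous_subspaceT/continuous_shift_integral.
by have [xi _ Gxi] := IVT M_le G_cont nu_between; exists xi.
Qed.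

Lemma exists_unique_shift_integral_eq nu L : 0 < L -> `|nu| < c * T * L ->
  exists! xi, G xi = nu.
Proof.
move=> L_gt0 nuL; have [xi Gxi] := exists_shift_integral_eq L_gt0 nuL.
exists xi; split=> // xi' Gxi'.
by apply: (inc_inj (le_mono shift_integral_lt)); rewrite Gxi Gxi'.
Qed.

End shift_integral.

Lemma exists_mulr_gt_norm {R : realFieldType} (k x : R) : 0 < k ->
  exists2 L, 0 < L & `|x| < k * L.
Proof.
move=> k_gt0; exists (`|x| / k + 1); first by rewrite ltr_wpDl // divr_ge0 // ltW.
by rewrite mulrDr mulr1 mulrCA divff ?gt_eqF // mulr1 ltrDl.
Qed.

Section squeezed_weight.
Context {R : realType}.
Variables (T p C : R) (h g : R -> R).
Hypotheses (T_ge0 : 0 <= T) (p_ge1 : 1 <= p) (C_gt0 : 0 < C).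
Hypotheses (mg : measurable_fun (Icc T) g) (h_Lp : in_Lp T p (fun t => (h t)^-1)).
Hypotheses (h_ge0 : forall t, Icc T t -> 0 <= h t)
  (h_gt0 : {ae leb R, forall t, Icc T t -> 0 < h t})
  (hgC : forall t, Icc T t -> h t <= g t <= C).

(* Where h vanishes, g may vanish too and (g t)^-1 is then the junk value 0;
   this only happens on a null set. *)
Lemma integrable_inv_squeezed : (leb R).-integrable (Icc T) (EFin \o (fun t => (g t)^-1)).
Proof.
apply: (ae_le_integrable (measurable_Icc T) _ (in_Lp_integrable T_ge0 p_ge1 h_Lp)).
  exact: measurableT_comp measurable_fun_inv mg.
apply: ae_impl h_gt0 => t h_gt0_t It; have /andP[hg _] := hgC It.
have ht := h_gt0_t It; have gt := lt_le_trans ht hg.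
by rewrite !gtr0_norm ?invr_gt0 // lef_pV2.
Qed.

Lemma inv_squeezed_ge0 t : Icc T t -> 0 <= (g t)^-1.
Proof. by move=> It; have /andP[/(le_trans (h_ge0 It)) g_ge0 _] := hgC It; rewrite invr_ge0. Qed.

Lemma inv_squeezed_ge : {ae leb R, forall t, Icc T t -> C^-1 <= (g t)^-1}.
Proof.
apply: ae_impl h_gt0 => t h_gt0_t It; have /andP[hg gC] := hgC It.
by rewrite lef_pV2 ?posrE ?(lt_le_trans (h_gt0_t It) hg).
Qed.

End squeezed_weight.

Lemma measurable_primF {R : realType} (T : R) (F : R -> R) : 0 <= T -> in_L1 T F ->
  measurable_fun (Icc T) (primF F).
Proof.
move=> T_ge0 F_int; apply: subspace_continuous_measurable_fun (measurable_Icc T) _.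
exact: parameterized_integral_continuous T_ge0 F_int.
Qed.

Theorem lemma2p6 (R : realType) (T nu1 nu2 p : R)
  (Phi Phiinv : R -> R) (A F : (R -> R) -> R -> R) (h1 h2 psi : R -> R) :
  0 < T -> 1 < p ->
  (* Phi : R -> R strictly increasing homeomorphism, Phiinv its inverse *)
  continuous Phi -> (forall a b, a < b -> Phi a < Phi b) ->
  cancel Phi Phiinv -> cancel Phiinv Phi -> continuous Phiinv ->
  (* A : W^{1,p}(I) -> C(I,R), continuous for the sup norms *)
  (forall x, W1p T p x -> {within (Icc T), continuous (A x)}) ->
  (forall x, W1p T p x -> forall e, 0 < e -> exists2 d, 0 < d &
     forall y, W1p T p y -> sup_close T x y d -> sup_close T (A x) (A y) e) ->
  (* h1, h2 continuous, non-negative, 1/h1, 1/h2 in L^p *)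
  {within (Icc T), continuous h1} -> {within (Icc T), continuous h2} ->
  (forall t, 0 <= t <= T -> 0 <= h1 t) -> (forall t, 0 <= t <= T -> 0 <= h2 t) ->
  leb R ((Icc T) `&` [set t | h1 t = 0]) = 0%E ->
  leb R ((Icc T) `&` [set t | h2 t = 0]) = 0%E ->
  in_Lp T p (fun t => (h1 t)^-1) -> in_Lp T p (fun t => (h2 t)^-1) ->
  (forall x, W1p T p x -> forall t, 0 <= t <= T -> h1 t <= A x t <= h2 t) ->
  (* F : W^{1,p}(I) -> L^1(I), continuous *)
  (forall x, W1p T p x -> in_L1 T (F x)) ->
  (forall x, W1p T p x -> forall e, 0 < e -> exists2 d, 0 < d &
     forall y, W1p T p y -> sup_close T x y d ->
       Rintegral (leb R) (Icc T) (fun t => `|F x t - F y t|) <= e) ->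
  (* |F_x| <= psi a.e., psi >= 0 in L^1 *)
  (forall t, 0 <= psi t) -> in_L1 T psi ->
  (forall x, W1p T p x ->
     {ae leb R, forall t, (Icc T) t -> `|F x t| <= psi t}) ->
  (forall x, W1p T p x -> exists! xi : R,
     Rintegral (leb R) (Icc T)
       (fun t => (A x t)^-1 * Phiinv (xi + primF (F x) t)) = nu2 - nu1) /\
  (exists2 c0 : R, 0 < c0 & forall x, W1p T p x -> forall xi : R,
     Rintegral (leb R) (Icc T)
       (fun t => (A x t)^-1 * Phiinv (xi + primF (F x) t)) = nu2 - nu1 ->
     `|xi| <= c0).
Proof.
move=> T_gt0 p_gt1 _ Phi_lt PhiK PhiinvK Phiinv_cont A_cont _ h1_cont h2_cont h1_ge0 h2_ge0
  h1_null _ h1_Lp _ hA F_int _ psi_ge0 psi_int F_psi.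
have Phiinv_lt : {homo Phiinv : u v / u < v}.
  by move=> u v uv; rewrite -(leW_mono (le_mono Phi_lt)) !PhiinvK.
have [tm tm_in h2_le] := EVT_max (ltW T_gt0) h2_cont.
have C_gt0 : 0 < h2 tm + 1 by rewrite ltr_wpDl // h2_ge0 //; rewrite -in_itv.
have c_gt0 : 0 < (h2 tm + 1)^-1 by rewrite invr_gt0.
have h1_gt0 : \forall t \ae leb R, Icc T t -> 0 < h1 t := ae_gt0_of_ge0 (measurable_Icc T)
  (subspace_continuous_measurable_fun (measurable_Icc T) h1_cont) h1_ge0 h1_null.
pose M := Rintegral (leb R) (Icc T) psi.
have [L L_gt0 nuL] := exists_mulr_gt_norm (nu2 - nu1) (mulr_gt0 c_gt0 T_gt0).
have solution x : W1p T p x ->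
    let G := shift_integral T (fun t => (A x t)^-1) Phiinv (primF (F x)) in
    (exists! xi, G xi = nu2 - nu1) /\
    forall xi, G xi = nu2 - nu1 -> - M + Phi (- L) <= xi <= M + Phi L.
  move=> Wx; have hAC t : Icc T t -> h1 t <= A x t <= h2 tm + 1.
    by move=> It; have /andP[-> Ah2] := hA x Wx t It; rewrite (le_trans Ah2) // ler_wpDr // h2_le.
  have mA := subspace_continuous_measurable_fun (measurable_Icc T) (A_cont x Wx).
  have a_int := integrable_inv_squeezed (ltW T_gt0) (ltW p_gt1) mA h1_Lp h1_gt0 hAC.
  have a_ge0 := inv_squeezed_ge0 h1_ge0 hAC; have a_ge := inv_squeezed_ge C_gt0 h1_gt0 hAC.
  have mP := measurable_primF (ltW T_gt0) (F_int x Wx).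
  have P_le := primF_le_Rintegral (F_int x Wx) psi_int (F_psi x Wx) (fun t _ => psi_ge0 t).
  split; first exact: (exists_unique_shift_integral_eq T_gt0 c_gt0 a_int a_ge0 a_ge mP P_le
    Phiinv_cont Phiinv_lt PhiK L_gt0 nuL).
  by move=> xi; apply: (shift_integral_eq_bounds T_gt0 c_gt0 a_int a_ge0 a_ge mP P_le
    Phiinv_cont Phiinv_lt PhiK L_gt0 nuL).
split=> [x /solution[]//|].
exists (`|M| + `|Phi L| + `|Phi (- L)| + 1) => [|x Wx xi /(solution x Wx).2/andP[]].
  by rewrite ltr_wpDl // !addr_ge0.
have := ler_norm M; have := ler_norm (Phi L); have := ler_norm (- Phi (- L)).
have := normr_ge0 M; have := normr_ge0 (Phi L); have := normr_ge0 (Phi (- L)).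
rewrite normrN ler_norml; lra.
Qed.
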